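(* Let $F$ be a field of characteristic zero, $G$ a group, $H$ an abelian group, $\beta$ a skew-symmetric bicharacter on $H$, $C$ an $H$-graded $\beta$-commutative algebra generating the variety of all $H$-graded $\beta$-commutative algebras, and $R$ any $G$-graded algebra. Let $\mathbf g=(g_1,\dots,g_n)\in G^n$, $\mathbf h=(h_1,\dots,h_n)\in H^n$ and let $f\in T_{G\times H}(R\otimes C)\cap P_{\mathbf g\times\mathbf h}$. Then there exists $f_0\in P_{\mathbf g}\cap T_G(R)$ such that $f=\phi_{\mathbf h}(f_0)$.
   Context: $H$ is written additively; $\beta:H\times H\to F^*$ satisfies $\beta(g+h,k)=\beta(g,k)\beta(h,k)$, $\beta(g,h+k)=\beta(g,h)\beta(g,k)$, $\beta(g,h)=\beta(h,g)^{-1}$. For homogeneous $a\in C_h,b\in C_k$, $[a,b]_\beta=ab-\beta(h,k)ba$; $C$ is $\beta$-commutative if $[a,b]_\beta=0$ for all $a,b$. $C$ generates the variety of all $H$-graded $\beta$-commutative algebras if its $H$-graded identities are exactly the $T_H$-ideal generated by $[x_{h,1},x_{k,2}]_\beta$, $h,k\in H$. $R\otimes C$ is $G\times H$-graded by $(R\otimes C)_{(g,h)}=R_g\otimes C_h$. $F\langle X|K\rangle$ denotes the free algebra on variables $x_{k,i}$ of degree $k\in K$, $i\ge1$; $T_K(\cdot)$ is the ideal of $K$-graded identities. For $\mathbf g\in G^n$, $P_{\mathbf g}$ is the span of $x_{g_{\sigma(1)},\sigma(1)}\cdots x_{g_{\sigma(n)},\sigma(n)}$, $\sigma\in S_n$;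 $P_{\mathbf g\times\mathbf h}$ is defined likewise with degrees $(g_i,h_i)$. Map $\zeta$: if $m=x_{(a_{\tau(1)},b_{\tau(1)}),\tau(1)}\cdots x_{(a_{\tau(k)},b_{\tau(k)}),\tau(k)}$ is a multilinear monomial in $F\langle X|G\times H\rangle$ in variables with indices $i_1<\dots<i_k$ ($\tau$ an ordering of these indices), let $\lambda\in F^*$ be such that $x_{b_{i_1},i_1}\cdots x_{b_{i_k},i_k}=\lambda\, x_{b_{\tau(1)},\tau(1)}\cdots x_{b_{\tau(k)},\tau(k)}$ in the free $H$-graded $\beta$-commutative algebra; set $\zeta(m)=\lambda m$. The linear map $\phi_{\mathbf h}$ on multilinear polynomials in $x_{a_1,1},\dots,x_{a_n,n}$ sends a monomial $x_{a_{\sigma(1)},\sigma(1)}\cdots x_{a_{\sigma(n)},\sigma(n)}$ to $\zeta(x_{(a_{\sigma(1)},h_{\sigma(1)}),\sigma(1)}\cdots x_{(a_{\sigma(n)},h_{\sigma(n)}),\sigma(n)})$. *)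

From HB Require Import structures.
From mathcomp Require Import all_boot all_order all_algebra all_fingroup.
From mathcomp Require Import finmap.
From mathcomp Require Import monalg.
From Stdlib Require Import ClassicalEpsilon.

Set Implicit Arguments.
Unset Strict Implicit.
Unset Printing Implicit Defensive.

Import GRing.Theory.
Local Open Scope ring_scope.

Section Defs.
Variable F : fieldType.

Definition is_group (G : Type) (gop : G -> G -> G) (gone : G) (ginv : G -> G) :=
  [/\ forall a b c, gop a (gop b c) = gop (gop a b) c,
      forall a, gop gone a = a, forall a, gop a gone = a,
      forall a, gop (ginv a) a = gone & forall a, gop a (ginv a) = gone].

Definition skew_bicharacter (H : zmodType) (beta : H -> H -> F) :=
  [/\ forall g h, beta g h != 0,
      forall g h k, beta (g + h) k = beta g k * beta h k,
      forall g h k, beta g (h + k) = beta g h * beta g k &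
      forall g h, beta g h = (beta h g)^-1].

Definition is_algebra (A : lmodType F) (mul : A -> A -> A) :=
  [/\ forall a x y, mul a (x + y) = mul a x + mul a y,
      forall a x y, mul (x + y) a = mul x a + mul y a,
      forall c x y, mul (c *: x) y = c *: mul x y,
      forall c x y, mul x (c *: y) = c *: mul x y &
      forall x y z, mul x (mul y z) = mul (mul x y) z].

Definition is_grading (K : eqType) (op : K -> K -> K)
    (A : lmodType F) (mul : A -> A -> A) (Ak : K -> A -> Prop) :=
  [/\ (forall k, Ak k 0) /\
        (forall k x y, Ak k x -> Ak k y -> Ak k (x + y)) /\
        (forall k c x, Ak k x -> Ak k (c *: x)),
      forall x, exists s : seq K, exists xs : K -> A,
          [/\ uniq s, forall k, Ak k (xs k) & x = \sum_(k <- s) xs k],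
      forall (s : seq K) (xs : K -> A), uniq s -> (forall k, Ak k (xs k)) ->
          \sum_(k <- s) xs k = 0 -> forall k, k \in s -> xs k = 0 &
      forall k l x y, Ak k x -> Ak l y -> Ak (op k l) (mul x y)].

Definition beta_commutative (H : zmodType) (beta : H -> H -> F)
    (A : lmodType F) (mul : A -> A -> A) (Ah : H -> A -> Prop) :=
  forall h k a b, Ah h a -> Ah k b -> mul a b - beta h k *: mul b a = 0.

(* The free K-graded algebra F<X|K>: F-linear combinations of words in *)
(* the variables x_{k,i} = (k, i) : K * nat.  (It contains the empty   *)
(* word; the free non-unital algebra is the part with zero constant    *)
(* term, see [no_const].)                                              *)
Definition FA (K : choiceType) := {malg F[{fmonom (K * nat)%type}]}.

Definition word (K : choiceType) (s : seq (K * nat)) : {fmonom (K * nat)%type} :=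
  FMonom s.

Definition no_const (K : choiceType) (p : FA K) := p@_(word [::]) = 0.

Definition evalw (K : choiceType) (A : lmodType F) (mul : A -> A -> A)
    (phi : K * nat -> A) (w : seq (K * nat)) : A :=
  match w with
  | [::] => 0
  | x :: s => foldl (fun a y => mul a (phi y)) (phi x) s
  end.

Definition evalp (K : choiceType) (A : lmodType F) (mul : A -> A -> A)
    (phi : K * nat -> A) (p : FA K) : A :=
  \sum_(w <- msupp p) p@_w *: evalw mul phi w.

Definition graded_identity (K : choiceType) (A : lmodType F) (mul : A -> A -> A)
    (Ak : K -> A -> Prop) (p : FA K) :=
  no_const p /\
  forall phi : K * nat -> A, (forall k i, Ak k (phi (k, i))) -> evalp mul phi p = 0.

Definition wdeg (H : zmodType) (w : seq (H * nat)) : H := \sum_(x <- w) x.1.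

Definition homogeneous (H : zmodType) (h : H) (p : FA H) :=
  forall w, w \in msupp p -> wdeg (w : seq (H * nat)) = h.

Definition subst (H : zmodType) (psi : H * nat -> FA H) (p : FA H) : FA H :=
  \sum_(w <- msupp p) p@_w *: \prod_(x <- (w : seq (H * nat))) psi x.

Definition graded_endo (H : zmodType) (psi : H * nat -> FA H) :=
  forall h i, homogeneous h (psi (h, i)) /\ no_const (psi (h, i)).

Definition T_ideal_closed (H : zmodType) (I : FA H -> Prop) :=
  [/\ I 0, forall p q, I p -> I q -> I (p + q),
      forall c p, I p -> I (c *: p),
      forall a p, I p -> I (a * p) /\ I (p * a) &
      forall psi, graded_endo psi -> forall p, I p -> I (subst psi p)].

Definition in_T_ideal (H : zmodType) (S : FA H -> Prop) (p : FA H) :=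
  forall I, T_ideal_closed I -> (forall s, S s -> I s) -> I p.

Definition beta_comm (H : zmodType) (beta : H -> H -> F) (h k : H) : FA H :=
  << word [:: (h, 1%N); (k, 2%N)] >> - beta h k *: << word [:: (k, 2%N); (h, 1%N)] >>.

Definition beta_comms (H : zmodType) (beta : H -> H -> F) (p : FA H) :=
  exists h k, p = beta_comm beta h k.

Definition generates_beta_variety (H : zmodType) (beta : H -> H -> F)
    (C : lmodType F) (mulC : C -> C -> C) (Ch : H -> C -> Prop) :=
  forall p : FA H, graded_identity mulC Ch p <-> in_T_ideal (beta_comms beta) p.

(* Tensor product R (x) C, built as the free vector space on R * C     *)
(* modulo the bilinearity relations.                                   *)
Section Tensor.
Variables (R C : lmodType F) (mulR : R -> R -> R) (mulC : C -> C -> C).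

Definition TRep := {malg F[(R * C)%type]}.

Definition bilin_rel (t : TRep) :=
  (exists a a' b, t = << (a + a', b) >> - << (a, b) >> - << (a', b) >>) \/
  (exists a b b', t = << (a, b + b') >> - << (a, b) >> - << (a, b') >>) \/
  (exists c a b, t = << (c *: a, b) >> - c *: << (a, b) >>) \/
  (exists c a b, t = << (a, c *: b) >> - c *: << (a, b) >>).

Definition tensor_zero (t : TRep) :=
  forall S : TRep -> Prop,
    [/\ S 0, forall x y, S x -> S y -> S (x + y) & forall c x, S x -> S (c *: x)] ->
    (forall x, bilin_rel x -> S x) -> S t.

Definition tmul (t t' : TRep) : TRep :=
  \sum_(u <- msupp t) \sum_(v <- msupp t')
     << (t@_u * t'@_v) *g (mulR u.1 v.1, mulC u.2 v.2) >>.

(* representatives of elements of (R (x) C)_(g,h) = R_g (x) C_h *)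
Definition tensor_hom (G H : Type) (Rg : G -> R -> Prop) (Ch : H -> C -> Prop)
    (gh : G * H) (t : TRep) :=
  forall u, u \in msupp t -> Rg gh.1 u.1 /\ Ch gh.2 u.2.

Definition tensor_graded_identity (G H : choiceType)
    (Rg : G -> R -> Prop) (Ch : H -> C -> Prop) (f : FA (G * H)%type) :=
  no_const f /\
  forall phi : (G * H) * nat -> TRep,
    (forall gh i, tensor_hom Rg Ch gh (phi (gh, i))) ->
    tensor_zero (evalp tmul phi f).
End Tensor.

(* Multilinear monomials and P_g.  Variables are x_{g_i, i}, i = 1..n  *)
(* (index i : 'I_n stands for variable number i.+1).                   *)
Definition mlword (K : choiceType) (n : nat) (g : 'I_n -> K) (s : 'S_n) :=
  word [seq (g (s k), (s k).+1) | k <- enum 'I_n].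

Definition in_P (K : choiceType) (n : nat) (g : 'I_n -> K) (f : FA K) :=
  forall w, w \in msupp f -> exists s : 'S_n, w = mlword g s.

(* lambda of the map zeta: for the monomial with ordering s, the       *)
(* lambda in F^* with x_{h_1,1}...x_{h_n,n} = lambda x_{h_s(1),s(1)}...  *)
(* x_{h_s(n),s(n)} in the free H-graded beta-commutative algebra       *)
(* F<X|H> / <[x_{h,1},x_{k,2}]_beta>^{T_H}.                             *)
Definition zeta_rel (H : zmodType) (beta : H -> H -> F) (n : nat) (h : 'I_n -> H)
    (s : 'S_n) (l : F) :=
  l != 0 /\
  in_T_ideal (beta_comms beta)
    (<< mlword h 1%g >> - l *: << mlword h s >>).

Definition zeta_lambda (H : zmodType) (beta : H -> H -> F) (n : nat) (h : 'I_n -> H)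
    (s : 'S_n) : F :=
  epsilon (inhabits 1) (zeta_rel beta h s).

Definition phi_h (G H : choiceType) (n : nat) (g : 'I_n -> G) (h : 'I_n -> H)
    (lam : 'S_n -> F) (f0 : FA G) : FA (G * H)%type :=
  \sum_(s : 'S_n) << (lam s * f0@_(mlword g s)) *g mlword (fun i => (g i, h i)) s >>.

End Defs.

(* Write f = sum_s a_s x_s, where x_s is the monomial of P_{g x h} with variables in the
   order s. Evaluating f at pure tensors r (x) c and contracting the C-factor with a linear
   form l gives sum_s a_s l(c_s) r_s = 0, where r_s and c_s are the values of the monomials
   of P_g and P_h in the order s. As C satisfies the beta-commutator identities,
   c_s = lambda_s^-1 c_1. Moreover c_1 can be made nonzero: otherwise x_{h_1,1}...x_{h_n,n}
   would be an identity of C, hence in the T-ideal of the beta-commutators, which the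
   twisted exterior algebra e_j e_k = beta(h_j, h_k) e_k e_j on n generators refutes.
   Taking l(c_1) = 1 shows that f_0 = sum_s lambda_s^-1 a_s x_{g,s} is a graded identity
   of R, and phi_h(f_0) = f by construction. *)

From HB Require Import structures.
From mathcomp Require Import all_boot all_order all_algebra all_fingroup.
From mathcomp Require Import finmap monalg.
From mathcomp Require classical_sets.
From Stdlib Require Import ClassicalEpsilon.

Set Implicit Arguments.
Unset Strict Implicit.
Unset Printing Implicit Defensive.

Import GRing.Theory.
Local Open Scope ring_scope.

Section LinearExtension.
Variables (F : fieldType) (K : choiceType) (V : lmodType F) (B : K -> V).

Definition lin_ext (p : {malg F[K]}) : V := \sum_(k <- msupp p) p@_k *: B k.

Lemma lin_extEw (d : {fset K}) p : (msupp p `<=` d)%fset ->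
  lin_ext p = \sum_(k <- d) p@_k *: B k.
Proof.
move=> le; rewrite /lin_ext (big_fset_incl _ le) // => k _ /mcoeff_outdom ->.
by rewrite scale0r.
Qed.

Lemma lin_ext_is_linear : linear lin_ext.
Proof.
move=> c p q; pose d := (msupp p `|` msupp q)%fset.
have le_cpq : (msupp (c *: p + q) `<=` d)%fset.
  by apply: fsubset_trans (msuppD_le _ _) _; apply: fsetSU; apply: msuppZ_le.
rewrite (lin_extEw le_cpq) (lin_extEw (fsubsetUl (msupp p) (msupp q))).
rewrite (lin_extEw (fsubsetUr (msupp p) (msupp q))).
rewrite scaler_sumr -big_split; apply: eq_bigr => k _ /=.
by rewrite mcoeffD mcoeffZ scalerDl scalerA.
Qed.

HB.instance Definition _ :=
  GRing.isLinear.Build F {malg F[K]} V *:%R lin_ext lin_ext_is_linear.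

Lemma lin_extU c k : lin_ext << c *g k >> = c *: B k.
Proof. by rewrite (lin_extEw msuppU_le) big_seq_fset1 mcoeffUU. Qed.

Lemma lin_ext_binom c k1 k2 : lin_ext (<< k1 >> - c *: << k2 >>) = B k1 - c *: B k2.
Proof. by rewrite linearB linearZ /= !lin_extU !scale1r. Qed.

End LinearExtension.

Lemma lin_ext_comp (F : fieldType) (K : choiceType) (V W : lmodType F)
    (B : K -> V) (L : {linear V -> W}) p :
  L (lin_ext B p) = lin_ext (L \o B) p.
Proof. by rewrite /lin_ext linear_sum; apply: eq_bigr => k _; rewrite linearZ. Qed.

Lemma scale_malgU (F : fieldType) (K : choiceType) (c x : F) (k : K) :
  c *: << x *g k >> = << c * x *g k >>.
Proof. by apply/malgP => k'; rewrite mcoeffZ !mcoeffU mulrnAr. Qed.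

Lemma mulr_malgC (F : fieldType) (K : choiceType) (p : FA F K) (c : F) :
  p * c%:MP = c *: p.
Proof.
rewrite malgME msuppC; case: eqP => [->|_].
  by rewrite scale0r big1 // => k _; rewrite big_nil.
rewrite {3}[p]monalgE scaler_sumr; apply: eq_bigr => k _.
by rewrite big_seq_fset1 mcoeffC eqxx mulr1n mulm1 scale_malgU mulrC.
Qed.

Section Words.
Variables (F : fieldType) (K : choiceType).
Implicit Types (u v : seq (K * nat)).

Lemma word_inj : injective (@word K).
Proof. by move=> u v /(congr1 (@fmonom_val _)). Qed.

Lemma word_nil : word [::] = mone :> {fmonom (K * nat)%type}.
Proof. by apply: val_inj; rewrite /= fm1. Qed.

Lemma wordM u v : mmul (word u) (word v) = word (u ++ v).
Proof. by apply: val_inj; rewrite /= fmM. Qed.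

Lemma mcoeffU_word (c : F) u v : << c *g word u >>@_(word v) = c *+ (u == v) :> F.
Proof. by rewrite mcoeffU (inj_eq word_inj). Qed.

Lemma no_const_word u : u != [::] -> no_const (<< word u >> : FA F K).
Proof. by move=> u0; rewrite /no_const mcoeffU_word (negbTE u0). Qed.

Lemma no_const_word_binom (c : F) u v : u != [::] -> v != [::] ->
  no_const (<< word u >> - c *: << word v >> : FA F K).
Proof.
move=> u0 v0; rewrite /no_const mcoeffB mcoeffZ !mcoeffU_word.
by rewrite (negbTE u0) (negbTE v0) mulr0 subr0.
Qed.

Lemma malgU_wordM (c d : F) u v :
  << c *g word u >> * << d *g word v >> = << c * d *g word (u ++ v) >> :> FA F K.
Proof. by rewrite malgM_def fgmulUU wordM. Qed.

Lemma malgU1_wordM u v : << word u >> * << word v >> = << word (u ++ v) >> :> FA F K.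
Proof. by rewrite malgU_wordM mulr1. Qed.

Lemma mulr_word_binoml (c : F) u v w :
  (<< word u >> - c *: << word v >>) * << word w >> =
  << word (u ++ w) >> - c *: << word (v ++ w) >> :> FA F K.
Proof. by rewrite mulrBl -scalerAl !malgU1_wordM. Qed.

Lemma mulr_word_binomr (c : F) u v w :
  << word w >> * (<< word u >> - c *: << word v >>) =
  << word (w ++ u) >> - c *: << word (w ++ v) >> :> FA F K.
Proof. by rewrite mulrBr !scale_malgU !malgU_wordM !mul1r mulr1. Qed.

Lemma no_const_neq1 (p : FA F K) w : no_const p -> w \in msupp p -> w != mone.
Proof.
by rewrite /no_const word_nil => p1; apply: contraL => /eqP ->; rewrite -mcoeff_eq0 p1.
Qed.

Lemma no_const_mull (a b : FA F K) : no_const a -> no_const (a * b).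
Proof.
move=> na; rewrite /no_const word_nil mcoeffMl big1_seq // => u /andP[_ ua].
by rewrite big1 // => v _; rewrite fmM_eq1 (negbTE (no_const_neq1 na ua)).
Qed.

Lemma no_const_mulr (a b : FA F K) : no_const b -> no_const (a * b).
Proof.
move=> nb; rewrite /no_const word_nil mcoeffMl big1 // => u _.
by rewrite big1_seq // => v /andP[_ vb];
  rewrite fmM_eq1 (negbTE (no_const_neq1 nb vb)) andbF.
Qed.

Lemma no_const_sub_const (a : FA F K) : no_const (a - (a@_(word [::]))%:MP).
Proof. by rewrite /no_const mcoeffB mcoeffC word_nil eqxx mulr1n subrr. Qed.

End Words.

Section Evaluation.
Variables (F : fieldType) (K : choiceType) (A : lmodType F) (mul : A -> A -> A).
Hypothesis A_alg : is_algebra mul.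
Variable phi : K * nat -> A.

Local Notation ev := (evalw mul phi).
Local Notation evp := (evalp mul phi).

Lemma evalpE (p : FA F K) : evp p = lin_ext (fun w : {fmonom (K * nat)%type} => ev w) p.
Proof. by []. Qed.

HB.instance Definition _ :=
  GRing.isLinear.Build F (FA F K) A *:%R evp (lin_ext_is_linear _).

Lemma evalpU c (w : {fmonom (K * nat)%type}) : evp << c *g w >> = c *: ev w.
Proof. exact: lin_extU. Qed.

Lemma evalp_word_binom c u v :
  evp (<< word u >> - c *: << word v >>) = ev u - c *: ev v.
Proof. exact: lin_ext_binom. Qed.

Lemma alg_mulr0 x : mul x 0 = 0.
Proof.
case: A_alg => mulDr _ _ _ _.
by apply: (addrI (mul x 0)); rewrite -mulDr !addr0.
Qed.

Lemma alg_mul0r x : mul 0 x = 0.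
Proof.
case: A_alg => _ mulDl _ _ _.
by apply: (addrI (mul 0 x)); rewrite -mulDl !addr0.
Qed.

Lemma alg_mul_sumr x (I : Type) (r : seq I) (c : I -> F) (y : I -> A) :
  mul x (\sum_(i <- r) c i *: y i) = \sum_(i <- r) c i *: mul x (y i).
Proof.
case: A_alg => mulDr _ _ mulZr _; elim: r => [|i r IH]; first by rewrite !big_nil alg_mulr0.
by rewrite !big_cons mulDr mulZr IH.
Qed.

Lemma alg_mul_suml y (I : Type) (r : seq I) (c : I -> F) (x : I -> A) :
  mul (\sum_(i <- r) c i *: x i) y = \sum_(i <- r) c i *: mul (x i) y.
Proof.
case: A_alg => _ mulDl mulZl _ _; elim: r => [|i r IH]; first by rewrite !big_nil alg_mul0r.
by rewrite !big_cons mulDl mulZl IH.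
Qed.

Lemma evalw_cat u w : u != [::] -> w != [::] -> ev (u ++ w) = mul (ev u) (ev w).
Proof.
case: u => [|x u] // _; case: w => [|y w] // _; case: A_alg => _ _ _ _ mulA.
rewrite /= foldl_cat /=; move: (foldl _ _ u) => a.
by elim: w (phi y) => //= z w IH b; rewrite -mulA IH.
Qed.

Lemma evalw_cons x w : w != [::] -> ev (x :: w) = mul (phi x) (ev w).
Proof. exact: (@evalw_cat [:: x]). Qed.

Lemma evalp_mul (a b : FA F K) : no_const a -> no_const b ->
  evp (a * b) = mul (evp a) (evp b).
Proof.
move=> na nb; rewrite evalpE malgME linear_sum alg_mul_suml.
apply: eq_big_seq => u ua; rewrite linear_sum alg_mul_sumr scaler_sumr.
apply: eq_big_seq => v vb; rewrite /= lin_extU -scalerA fmM evalw_cat //.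
  by rewrite -fm1 -fmP (no_const_neq1 na).
by rewrite -fm1 -fmP (no_const_neq1 nb).
Qed.

End Evaluation.

Definition graded_eval (K A : Type) (Ak : K -> A -> Prop) (phi : K * nat -> A) :=
  forall k i, Ak k (phi (k, i)).

Section GradedIdentities.
Variables (F : fieldType) (H : zmodType) (A : lmodType F) (mul : A -> A -> A)
  (Ah : H -> A -> Prop).
Hypotheses (A_alg : is_algebra mul) (Ah0 : forall h, Ah h 0)
  (AhD : forall h x y, Ah h x -> Ah h y -> Ah h (x + y))
  (AhZ : forall h c x, Ah h x -> Ah h (c *: x))
  (AhM : forall h k x y, Ah h x -> Ah k y -> Ah (h + k) (mul x y)).

Lemma evalw_graded phi w : graded_eval Ah phi -> Ah (wdeg w) (evalw mul phi w).
Proof.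
case: w => [|[k i] w] gphi /=; first exact: Ah0.
rewrite /wdeg big_cons /=; move: (gphi k i); move: k (phi (k, i)).
elim: w => [|[l j] w IH] k a ha /=.
  by rewrite big_nil addr0.
by rewrite big_cons addrA; apply: IH; apply: AhM.
Qed.

Lemma evalp_graded phi h (p : FA F H) :
  graded_eval Ah phi -> homogeneous h p -> Ah h (evalp mul phi p).
Proof.
move=> gphi hp; rewrite /evalp big_seq; elim/big_rec: _ => [|w a /hp wh IH].
  exact: Ah0.
by apply: AhD => //; apply: AhZ; rewrite -wh; apply: evalw_graded.
Qed.

Lemma evalp_prod (psi : H * nat -> FA F H) phi (w : seq (H * nat)) :
  w != [::] -> (forall x, no_const (psi x)) ->
  evalp mul phi (\prod_(x <- w) psi x) = evalw mul (evalp mul phi \o psi) w.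
Proof.
case: w => [|x w] // _ npsi; elim: w x => [|y w IH] x.
  by rewrite big_cons big_nil mulr1.
rewrite big_cons evalp_mul // ?IH; last by rewrite big_cons; apply: no_const_mull.
by rewrite [RHS](evalw_cons A_alg).
Qed.

Lemma graded_identity_mull a p :
  graded_identity mul Ah p -> graded_identity mul Ah (a * p).
Proof.
move=> [np ep]; split; first exact: no_const_mulr.
move=> phi gphi; set c := a@_(word [::]); have na' := no_const_sub_const a.
have -> : a * p = c *: p + (a - c%:MP) * p by rewrite mulrBl mul_malgC addrC subrK.
by rewrite linearD linearZ /= evalp_mul // ep // scaler0 add0r alg_mulr0.
Qed.

Lemma graded_identity_mulr a p :
  graded_identity mul Ah p -> graded_identity mul Ah (p * a).
Proof.
move=> [np ep]; split; first exact: no_const_mull.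
move=> phi gphi; set c := a@_(word [::]); have na' := no_const_sub_const a.
have -> : p * a = c *: p + p * (a - c%:MP) by rewrite mulrBr mulr_malgC addrC subrK.
by rewrite linearD linearZ /= evalp_mul // ep // scaler0 add0r alg_mul0r.
Qed.

Lemma graded_identity_subst psi : graded_endo psi ->
  forall p, graded_identity mul Ah p -> graded_identity mul Ah (subst psi p).
Proof.
move=> gpsi p [np ep].
have npsi x : no_const (psi x) by case: x => k i; case: (gpsi k i).
split.
  rewrite /subst /no_const raddf_sum big1_seq // => w /andP[_ wp].
  move: (no_const_neq1 np wp); rewrite fmP fm1 /= mcoeffZ.
  by case: (fmonom_val w) => // x w' _; rewrite big_cons (no_const_mull _ (npsi x)) mulr0.
move=> phi gphi; rewrite -(ep (evalp mul phi \o psi)); last first.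
  by move=> k i; apply: evalp_graded => //; case: (gpsi k i).
rewrite /subst -[X in evalp _ _ X]/(lin_ext _ p) (lin_ext_comp _ (evalp mul phi)).
rewrite /lin_ext /evalp !big_seq; apply: eq_bigr => w wp /=.
by rewrite evalp_prod // -fm1 -fmP (no_const_neq1 np).
Qed.

Lemma graded_identity_T_ideal : T_ideal_closed (graded_identity mul Ah).
Proof.
split.
- by split=> [|phi _]; [rewrite /no_const mcoeff0 | rewrite linear0].
- move=> p q [np ep] [nq eq]; split; first by rewrite /no_const mcoeffD np nq addr0.
  by move=> phi gphi; rewrite linearD /= ep // eq // addr0.
- move=> c p [np ep]; split; first by rewrite /no_const mcoeffZ np mulr0.
  by move=> phi gphi; rewrite linearZ /= ep // scaler0.
- by move=> a p p_id; split; [apply: graded_identity_mull | apply: graded_identity_mulr].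
- exact: graded_identity_subst.
Qed.

Lemma in_T_ideal_graded_identity (beta : H -> H -> F) :
  beta_commutative beta mul Ah ->
  forall p, in_T_ideal (beta_comms beta) p -> graded_identity mul Ah p.
Proof.
move=> A_comm p; apply; first exact: graded_identity_T_ideal.
move=> _ [h [k ->]]; split; first exact: no_const_word_binom.
by move=> phi gphi; rewrite evalp_word_binom; apply: A_comm.
Qed.

End GradedIdentities.

Section TwistedExteriorAlgebra.
Variables (F : fieldType) (H : zmodType) (beta : H -> H -> F).
Hypothesis beta_bichar : skew_bicharacter beta.
Variables (n : nat) (h : 'I_n -> H).

Local Notation N := #|{: {set 'I_n}}|.
Local Notation set_of := (@enum_val _ (mem {: {set 'I_n}})).
Local Notation rank_of := (@enum_rank {set 'I_n}).

Lemma bichar_mulC_inv a b : beta a b * beta b a = 1.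
Proof. by case: beta_bichar => beta_neq0 _ _ ->; rewrite mulVf. Qed.

(* [ext_gen j] maps the basis vector of a set S to +- that of [j |: S] if [j \notin S],
   and to 0 otherwise; the signs make e_j e_k = beta(h_j, h_k) e_k e_j. *)
Definition ext_sign (j : 'I_n) (S : {set 'I_n}) : F :=
  \prod_(t in S) (if (t < j)%N then beta (h j) (h t) else 1).

Definition ext_gen (j : 'I_n) : 'M[F]_N :=
  \matrix_(a, b) if (j \notin set_of b) && (set_of a == j |: set_of b)
                 then ext_sign j (set_of b) else 0.

Lemma ext_sign_setU1 j (k : 'I_n) (S : {set 'I_n}) : k \notin S ->
  ext_sign j (k |: S) = (if (k < j)%N then beta (h j) (h k) else 1) * ext_sign j S.
Proof. by move=> kS; rewrite /ext_sign big_setU1. Qed.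

Lemma ext_gen_mulE j k a b : (ext_gen j *m ext_gen k) a b =
  if [&& k \notin set_of b, j \notin k |: set_of b & set_of a == j |: (k |: set_of b)]
  then ext_sign j (k |: set_of b) * ext_sign k (set_of b) else 0.
Proof.
set S := set_of b; rewrite !mxE (bigD1 (rank_of (k |: S))) //= big1 ?addr0.
  rewrite !mxE !enum_rankK -/S eqxx andbT.
  by case: (k \notin S); case: ifP => _ /=; rewrite ?mulr0 ?mul0r.
move=> c /negbTE c_neq; rewrite [X in _ * X]mxE -/S.
case: ifP => [/andP[_ /eqP cS]|_]; last by rewrite mulr0.
by move: c_neq; rewrite -cS enum_valK eqxx.
Qed.

Lemma ext_gen_comm j k :
  ext_gen j *m ext_gen k = beta (h j) (h k) *: (ext_gen k *m ext_gen j).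
Proof.
apply/matrixP => a b; rewrite [RHS]mxE !ext_gen_mulE; set S := set_of b.
have [<-|jk] := eqVneq j k; first by rewrite !setU11 /= !andbF /= mulr0.
have -> : (j \notin k |: S) = (j \notin S) by rewrite in_setU1 (negbTE jk).
have -> : (k \notin j |: S) = (k \notin S) by rewrite in_setU1 eq_sym (negbTE jk).
rewrite setUCA.
have [kS|kS] := boolP (k \in S); first by rewrite /= ?andbF mulr0.
have [jS|jS] := boolP (j \in S); first by rewrite /= ?andbF mulr0.
case: ifP => _; last by rewrite mulr0.
rewrite !ext_sign_setU1 //; case: (ltngtP j k) => [jk'|kj|/val_inj e].
- by rewrite mul1r !mulrA bichar_mulC_inv mul1r mulrC.
- by rewrite mul1r -mulrA [ext_sign j S * _]mulrC.
- by move/eqP: jk.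
Qed.

Inductive ext_homogeneous : H -> 'M[F]_N -> Prop :=
| ext_hom0 a : ext_homogeneous a 0
| ext_homD a x y : ext_homogeneous a x -> ext_homogeneous a y ->
    ext_homogeneous a (x + y)
| ext_homZ a c x : ext_homogeneous a x -> ext_homogeneous a (c *: x)
| ext_hom_gen j : ext_homogeneous (h j) (ext_gen j)
| ext_homM a b x y : ext_homogeneous a x -> ext_homogeneous b y ->
    ext_homogeneous (a + b) (x *m y).

Lemma ext_gen_comm_homogeneous j b y : ext_homogeneous b y ->
  ext_gen j *m y = beta (h j) b *: (y *m ext_gen j).
Proof.
case: beta_bichar => _ _ beta_addr _.
elim=> {b y} [a|a x y _ IHx _ IHy|a c x _ IHx|k|a b x y _ IHx _ IHy].
- by rewrite mulmx0 mul0mx scaler0.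
- by rewrite mulmxDr mulmxDl IHx IHy scalerDr.
- by rewrite -scalemxAr -scalemxAl IHx !scalerA mulrC.
- exact: ext_gen_comm.
- rewrite mulmxA IHx -scalemxAl -mulmxA IHy -scalemxAr scalerA beta_addr.
  by rewrite mulmxA.
Qed.

Lemma ext_homogeneous_comm a x b y :
  ext_homogeneous a x -> ext_homogeneous b y -> x *m y = beta a b *: (y *m x).
Proof.
case: beta_bichar => _ beta_addl _ _ hx hy.
elim: hx => {a x} [a|a x1 x2 _ IH1 _ IH2|a c x _ IH|j|a1 a2 x1 x2 _ IH1 _ IH2].
- by rewrite mul0mx mulmx0 scaler0.
- by rewrite mulmxDl mulmxDr IH1 IH2 scalerDr.
- by rewrite -scalemxAl -scalemxAr IH !scalerA mulrC.
- exact: ext_gen_comm_homogeneous.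
- rewrite -mulmxA IH2 -scalemxAr !mulmxA IH1 -scalemxAl.
  by rewrite scalerA beta_addl mulrC.
Qed.

Lemma mulmx_algebra : is_algebra (@mulmx F N N N).
Proof.
split=> *; [exact: mulmxDr | exact: mulmxDl | exact/esym/scalemxAl |
            exact/esym/scalemxAr | exact: mulmxA].
Qed.

Definition ext_word (l : seq 'I_n) : 'M[F]_N := foldr (fun j M => ext_gen j *m M) 1%:M l.

Lemma ext_word_col_set0 (l : seq 'I_n) c : sorted (fun i j : 'I_n => (i < j)%N) l ->
  ext_word l c (rank_of set0) = (set_of c == [set x in l])%:R.
Proof.
elim: l c => [|j l IH] c /=.
  move=> _; rewrite mxE -(inj_eq enum_val_inj) enum_rankK.
  by congr (_ == _)%:R; apply/setP => x; rewrite !inE.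
move=> sorted_jl; have sorted_l := path_sorted sorted_jl.
have j_lt : all (fun x : 'I_n => (j < x)%N) l.
  by apply: (order_path_min _ sorted_jl) => x y z; exact: ltn_trans.
rewrite mxE (bigD1 (rank_of [set x in l])) //= big1 ?addr0; last first.
  move=> d d_neq; rewrite IH //; case: eqP => [dl|_]; last by rewrite mulr0.
  by move: d_neq; rewrite -dl enum_valK eqxx.
rewrite IH // enum_rankK eqxx mulr1 mxE enum_rankK.
have jl : j \notin [set x in l].
  by rewrite inE; apply/negP => /(allP j_lt); rewrite ltnn.
have -> : ext_sign j [set x in l] = 1.
  by rewrite /ext_sign big1 // => t; rewrite inE => /(allP j_lt) /ltnW; rewrite ltnNge => ->.
have -> : [set x in j :: l] = j |: [set x in l] by apply/setP => x; rewrite !inE.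
by rewrite jl /=; case: (_ == _).
Qed.

Lemma ext_word_enum_neq0 : ext_word (enum 'I_n) != 0.
Proof.
have sorted_enum : sorted (fun i j : 'I_n => (i < j)%N) (enum 'I_n).
  by have := iota_ltn_sorted 0 n; rewrite -val_enum_ord sorted_map.
apply: contraTneq isT => ext0.
have := ext_word_col_set0 (rank_of [set x in enum 'I_n]) sorted_enum.
by rewrite ext0 mxE enum_rankK eqxx => /esym/eqP; rewrite oner_eq0.
Qed.

Definition ext_eval (x : H * nat) : 'M[F]_N :=
  \sum_(j : 'I_n | (x.2 == j.+1) && (x.1 == h j)) ext_gen j.

Lemma ext_eval_homogeneous k i : ext_homogeneous k (ext_eval (k, i)).
Proof.
apply: big_ind => [|x y|j /andP[_ /eqP /= ->]];
  [exact: ext_hom0 | exact: ext_homD | exact: ext_hom_gen].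
Qed.

Lemma ext_evalE (k : 'I_n) : ext_eval (h k, k.+1) = ext_gen k.
Proof.
rewrite /ext_eval (big_pred1 k) // => j /=.
by rewrite eqSS (inj_eq val_inj) eq_sym; case: eqP => [->|]; rewrite ?eqxx.
Qed.

Lemma evalw_mulmx (phi : H * nat -> 'M[F]_N) (w : seq (H * nat)) : w != [::] ->
  evalw (@mulmx F N N N) phi w = foldr (fun y M => phi y *m M) 1%:M w.
Proof.
case: w => [|x w] // _; elim: w x => [|y w IH] x; first by rewrite /= mulmx1.
by rewrite (evalw_cons mulmx_algebra) // IH.
Qed.

Lemma mlword_notin_T_ideal : (0 < n)%N ->
  ~ in_T_ideal (beta_comms beta) << mlword h 1%g >>.
Proof.
move=> n_gt0 /(in_T_ideal_graded_identity mulmx_algebra ext_hom0 ext_homD ext_homZ ext_homM).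
case.
- by move=> a b x y hx hy; rewrite (ext_homogeneous_comm hx hy) subrr.
- move=> _ /(_ ext_eval ext_eval_homogeneous); rewrite evalpU scale1r evalw_mulmx.
    rewrite /= foldr_map; apply/eqP.
    rewrite (_ : foldr _ _ _ = ext_word (enum 'I_n)); first exact: ext_word_enum_neq0.
    rewrite /ext_word; elim: (enum 'I_n) => //= j js IH; by rewrite IH perm1 ext_evalE.
  by rewrite /= -size_eq0 size_map size_enum_ord -lt0n.
Qed.

End TwistedExteriorAlgebra.

Lemma in_T_ideal_closed (F : fieldType) (H : zmodType) (S : FA F H -> Prop) :
  T_ideal_closed (in_T_ideal S).
Proof.
split.
- by move=> I [].
- move=> p q Sp Sq I I_closed SI; case: (I_closed) => _ ID _ _ _.
  by apply: ID; [apply: Sp | apply: Sq].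
- by move=> c p Sp I I_closed SI; case: (I_closed) => _ _ IZ _ _; apply: IZ; apply: Sp.
- move=> a p Sp; split=> I I_closed SI; case: (I_closed) => _ _ _ IM _;
    by have [] := IM a p (Sp I I_closed SI).
- move=> psi psi_endo p Sp I I_closed SI; case: (I_closed) => _ _ _ _ Isubst.
  by apply: Isubst => //; apply: Sp.
Qed.

Section WordsModuloCommutators.
Variables (F : fieldType) (H : zmodType) (beta : H -> H -> F).
Hypothesis beta_bichar : skew_bicharacter beta.

Local Notation J := (in_T_ideal (beta_comms beta)).

Definition beta_assoc (u v : seq (H * nat)) :=
  exists2 l : F, l != 0 & J (<< word u >> - l *: << word v >>).

Lemma beta_assoc_refl u : beta_assoc u u.
Proof.
exists 1; first exact: oner_neq0.
rewrite scale1r subrr.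
by case: (in_T_ideal_closed (beta_comms beta)) => J0.
Qed.

Lemma beta_assoc_trans u v w : beta_assoc u v -> beta_assoc v w -> beta_assoc u w.
Proof.
move=> [l l0 Juv] [l' l'0 Jvw]; exists (l * l'); first by rewrite mulf_neq0.
have [_ JD JZ _ _] := in_T_ideal_closed (beta_comms beta).
have -> : << word u >> - (l * l') *: << word w >> =
    (<< word u >> - l *: << word v >>) + l *: (<< word v >> - l' *: << word w >>) :> FA F H.
  by rewrite scalerBr scalerA addrA subrK.
by apply: JD; [exact: Juv | apply: JZ; exact: Jvw].
Qed.

Lemma beta_assoc_cat2l x u v : beta_assoc u v -> beta_assoc (x ++ u) (x ++ v).
Proof.
move=> [l l0 Juv]; exists l; first exact: l0.
have [_ _ _ JM _] := in_T_ideal_closed (beta_comms beta).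
rewrite -(mulr_word_binomr l u v x); exact: (proj1 (JM _ _ Juv)).
Qed.

Lemma subst_beta_comm (psi : H * nat -> FA F H) (z1 z2 : H * nat) (c : F) :
  subst psi (<< word [:: z1; z2] >> - c *: << word [:: z2; z1] >>) =
  psi z1 * psi z2 - c *: (psi z2 * psi z1).
Proof.
rewrite [LHS](lin_ext_binom (fun w : {fmonom (H * nat)%type} => \prod_(x <- (w : seq _)) psi x)).
by rewrite !big_cons !big_nil !mulr1.
Qed.

Lemma subst_beta_comm_letters (psi : H * nat -> FA F H) z1 z2 x y c :
  psi z1 = << word [:: x] >> -> psi z2 = << word [:: y] >> ->
  subst psi (<< word [:: z1; z2] >> - c *: << word [:: z2; z1] >>) =
  << word [:: x; y] >> - c *: << word [:: y; x] >>.
Proof.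
by move=> psi1 psi2; rewrite subst_beta_comm psi1 psi2; congr (_ - _ *: _);
  apply: malgU1_wordM.
Qed.

(* The graded substitution x_{x.1,1} |-> x, x_{y.1,2} |-> y, which maps the generating
   beta-commutator to [x, y]_beta. *)
Definition letter_swap (x y z : H * nat) : FA F H :=
  if z == (x.1, 1%N) then << word [:: x] >>
  else if z == (y.1, 2%N) then << word [:: y] >> else << word [:: z] >>.

Lemma letter_swap_endo x y : graded_endo (letter_swap x y).
Proof.
have letter_hom z : homogeneous z.1 (<< word [:: z] >> : FA F H) /\
    no_const (<< word [:: z] >> : FA F H).
  split; last exact: no_const_word.
  by move=> w; rewrite msuppU1 inE => /eqP ->; rewrite /wdeg big_seq1.
move=> k i; rewrite /letter_swap.
case: eqP => [[-> _]|_]; first exact: letter_hom.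
case: eqP => [[-> _]|_]; first exact: letter_hom.
exact: (letter_hom (k, i)).
Qed.

Lemma letter_swap_fst x y : letter_swap x y (x.1, 1%N) = << word [:: x] >>.
Proof. by rewrite /letter_swap (eqxx (x.1, 1%N)). Qed.

Lemma letter_swap_snd x y : letter_swap x y (y.1, 2%N) = << word [:: y] >>.
Proof.
rewrite /letter_swap; have -> : ((y.1, 2%N) == (x.1, 1%N)) = false.
  by rewrite xpair_eqE andbF.
by rewrite (eqxx (y.1, 2%N)).
Qed.

Lemma beta_assoc_swap x y w : beta_assoc [:: x, y & w] [:: y, x & w].
Proof.
have [_ _ _ JM Jsubst] := in_T_ideal_closed (beta_comms beta).
exists (beta x.1 y.1); first by case: beta_bichar => beta_neq0 _ _ _; apply: beta_neq0.
have Jxy : J (beta_comm beta x.1 y.1) by move=> I _ SI; apply: SI; exists x.1, y.1.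
move: (Jsubst _ (letter_swap_endo x y) _ Jxy).
rewrite /beta_comm (subst_beta_comm_letters _ (letter_swap_fst x y) (letter_swap_snd x y)).
by move=> /(JM (<< word w >>)) [_]; rewrite mulr_word_binoml.
Qed.

Lemma beta_assoc_front x v1 v2 : beta_assoc (x :: v1 ++ v2) (v1 ++ x :: v2).
Proof.
elim: v1 => [|y v1 IH]; first exact: beta_assoc_refl.
exact: beta_assoc_trans (beta_assoc_swap x y _) (beta_assoc_cat2l [:: y] IH).
Qed.

Lemma beta_assoc_perm u v : perm_eq u v -> beta_assoc u v.
Proof.
elim: u v => [|x u IH] v.
  by move/perm_size; case: v => // _; apply: beta_assoc_refl.
move=> puv; have xv : x \in v by rewrite -(perm_mem puv) mem_head.
case/splitPr: xv puv => v1 v2 puv.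
have pu : perm_eq u (v1 ++ v2).
  by rewrite -(perm_cons x); apply: perm_trans puv _; rewrite -cat1s perm_catCA.
exact: beta_assoc_trans (beta_assoc_cat2l [:: x] (IH _ pu)) (beta_assoc_front x v1 v2).
Qed.

Lemma mlword_perm n (h : 'I_n -> H) (s : 'S_n) :
  perm_eq (mlword h 1%g : seq _) (mlword h s).
Proof.
have mlwordE t : (mlword h t : seq _) = map (fun i => (h i, i.+1)) (map t (enum 'I_n)).
  by rewrite /= -map_comp.
have mem_map_perm (t : 'S_n) i : i \in map t (enum 'I_n).
  by rewrite -[i](permKV t) map_f ?mem_enum.
rewrite !mlwordE; apply/perm_map/uniq_perm => [||i]; [| |by rewrite !mem_map_perm];
  by rewrite map_inj_uniq ?enum_uniq //; apply: perm_inj.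
Qed.

Lemma zeta_lambdaP n (h : 'I_n -> H) (s : 'S_n) :
  zeta_rel beta h s (zeta_lambda beta h s).
Proof.
apply: epsilon_spec; have [l l0 Jl] := beta_assoc_perm (mlword_perm h s).
by exists l.
Qed.
End WordsModuloCommutators.

Section ScalarSeparatingVector.
Variables (F : fieldType) (C : lmodType F) (m : C).
Hypothesis m_neq0 : m != 0.

(* [0] need not belong to [M], so that the empty set qualifies and Zorn's
   lemma applies to chains of such sets. *)
Definition avoids_m (M : C -> Prop) :=
  [/\ forall x y, M x -> M y -> M (x + y), forall c x, M x -> M (c *: x) & ~ M m].

Lemma maximal_avoids_m : exists2 A, avoids_m A &
  forall B : C -> Prop, (forall x, A x -> B x) -> ~ (forall x, B x -> A x) -> ~ avoids_m B.
Proof.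
have [|A [avA Amax]] := @classical_sets.Zorn_bigcup C avoids_m.
  move=> Ms Ms_av Ms_tot; split.
  - move=> x y [X MX Xx] [Y MY Yy].
    have [XY|YX] := Ms_tot X Y MX MY.
      by exists Y => //; case: (Ms_av Y MY) => MD _ _; apply: MD => //; apply: XY.
    by exists X => //; case: (Ms_av X MX) => MD _ _; apply: MD => //; apply: YX.
  - by move=> c x [X MX Xx]; exists X => //; case: (Ms_av X MX) => _ MZ _; apply: MZ.
  - by move=> [X MX Xm]; case: (Ms_av X MX) => _ _; apply.
by exists A => // B AB BA avB; apply: (Amax B) => //; split.
Qed.

Variable A : C -> Prop.
Hypotheses (avA : avoids_m A)
  (A_max : forall B : C -> Prop, (forall x, A x -> B x) -> ~ (forall x, B x -> A x) ->
    ~ avoids_m B).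

Let A0 y := y = 0 \/ A y.

Let A0D x y : A0 x -> A0 y -> A0 (x + y).
Proof.
case: avA => AD _ _.
by move=> [->|Ax] [->|Ay]; rewrite ?addr0 ?add0r; [left|right|right|right; apply: AD].
Qed.

Let A0Z c x : A0 x -> A0 (c *: x).
Proof.
case: avA => _ AZ _.
by move=> [->|Ax]; [left; rewrite scaler0 | right; apply: AZ].
Qed.

Let A0_notm : ~ A0 m.
Proof. by case: avA => _ _ Am [/eqP|]; [apply/negP|]. Qed.

(* Maximality makes [A + 0] a hyperplane complementing the line [F m]. *)
Lemma complement_line x : exists c, A0 (x - c *: m).
Proof.
have [A0x|nA0x] := classic (A0 x); first by exists 0; rewrite scale0r subr0.
pose B y := exists d, A0 (y - d *: x).
have [d A0md] : B m.
  apply: NNPP => nBm; apply: (A_max (B := B)).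
  - by move=> y Ay; exists 0; rewrite scale0r subr0; right.
  - by move=> BA; apply: nA0x; right; apply: BA; exists 1; rewrite scale1r subrr; left.
  split=> // [y z [d A0y] [e A0z]|c y [d A0y]].
    by exists (d + e); rewrite scalerDl opprD addrACA; apply: A0D.
  by exists (c * d); rewrite -scalerA -scalerBr; apply: A0Z.
have d_neq0 : d != 0.
  by apply: contra_notN A0_notm => /eqP d0; move: A0md; rewrite d0 scale0r subr0.
exists d^-1; have -> : x - d^-1 *: m = (- d^-1) *: (m - d *: x).
  by rewrite scalerBr scalerA mulNr mulVf // scaleN1r opprK scaleNr addrC.
exact: A0Z.
Qed.

Lemma complement_line_unique x c c' : A0 (x - c *: m) -> A0 (x - c' *: m) -> c = c'.
Proof.
move=> A0c A0c'; apply/eqP; apply: NNPP => /negP/negPf cc'.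
have : A0 ((c' - c) *: m).
  have -> : (c' - c) *: m = (x - c *: m) + (-1) *: (x - c' *: m).
    by rewrite scaleN1r opprB scalerBl [RHS]addrC [RHS]addrA subrK.
  by apply: A0D => //; apply: A0Z.
move=> /(A0Z (c' - c)^-1); rewrite scalerA mulVf ?scale1r //.
by rewrite subr_eq0 eq_sym cc'.
Qed.

End ScalarSeparatingVector.

Lemma exists_scalar_eq1 (F : fieldType) (C : lmodType F) (m : C) :
  m != 0 -> exists l : {scalar C}, l m = 1.
Proof.
move=> m_neq0; have [A avA A_max] := maximal_avoids_m m.
pose l x := epsilon (inhabits 0) (fun c => x - c *: m = 0 \/ A (x - c *: m)).
have lP x : x - l x *: m = 0 \/ A (x - l x *: m).
  exact: epsilon_spec (complement_line m_neq0 avA A_max x).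
have l_lin : linear_for *%R l.
  move=> c x y; apply: (complement_line_unique m_neq0 avA (lP (c *: x + y))).
  have -> : c *: x + y - (c * l x + l y) *: m = c *: (x - l x *: m) + (y - l y *: m).
    by rewrite scalerDl -scalerA opprD addrACA scalerBr.
  by have [AD AZ _] := avA; case: (lP x) (lP y) => [->|?] [->|?];
     rewrite ?scaler0 ?add0r ?addr0; auto.
pose lL : {scalar C} := HB.pack l (GRing.isLinear.Build _ _ _ _ l l_lin).
exists lL; apply: (complement_line_unique m_neq0 avA (lP m)).
by rewrite scale1r subrr; left.
Qed.

Section MultilinearSums.
Variables (F : fieldType) (K : choiceType) (n : nat) (k : 'I_n -> K).

Definition ml_sum (a : 'S_n -> F) : FA F K := \sum_(s : 'S_n) << a s *g mlword k s >>.

Lemma mlword_inj : injective (mlword k).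
Proof.
move=> s s' /word_inj/(congr1 (map snd)); rewrite -!map_comp => /eq_in_map e.
apply/permP => i; apply: val_inj.
by have := e i; rewrite -enumT mem_enum => /(_ isT) [].
Qed.

Lemma mlword_eq_nil s : (mlword k s == word [::]) = (n == 0%N).
Proof.
by rewrite (inj_eq (@word_inj _)) -size_eq0 size_map size_enum_ord.
Qed.

Lemma mcoeff_ml_sum a s : (ml_sum a)@_(mlword k s) = a s.
Proof.
rewrite raddf_sum (bigD1 s) //= mcoeffUU big1 ?addr0 // => s' s's.
by rewrite mcoeffU (inj_eq mlword_inj) (negbTE s's).
Qed.

Lemma mcoeff_ml_sum_out a w : (forall s, mlword k s != w) -> (ml_sum a)@_w = 0.
Proof.
by move=> w_out; rewrite raddf_sum big1 // => s _; rewrite /= mcoeffU (negbTE (w_out s)).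
Qed.

Lemma in_P_ml_sum a : in_P k (ml_sum a).
Proof.
move=> w; have [//|w_out] := classic (exists s, w = mlword k s).
rewrite -mcoeff_neq0 mcoeff_ml_sum_out ?eqxx // => s.
by apply/eqP => ws; apply: w_out; exists s.
Qed.

Lemma in_P_ml_sumE f : in_P k f -> f = ml_sum (fun s => f@_(mlword k s)).
Proof.
move=> fP; apply/malgP => w; have [[s ->]|w_out] := classic (exists s, w = mlword k s).
  by rewrite mcoeff_ml_sum.
rewrite mcoeff_ml_sum_out; last by move=> s; apply/eqP => ws; apply: w_out; exists s.
by apply/eqP; rewrite mcoeff_eq0; apply: contra_notN w_out => /fP.
Qed.

Lemma lin_ext_ml_sum (V : lmodType F) (B : {fmonom (K * nat)%type} -> V) a :
  lin_ext B (ml_sum a) = \sum_(s : 'S_n) a s *: B (mlword k s).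
Proof. by rewrite linear_sum; apply: eq_bigr => s _; rewrite /= lin_extU. Qed.

End MultilinearSums.

Lemma no_const_ml_sum (F : fieldType) (K K' : choiceType) n (k : 'I_n -> K)
    (k' : 'I_n -> K') (f : FA F K) (c : 'S_n -> F) :
  no_const f -> no_const (ml_sum k' (fun s => c s * f@_(mlword k s))).
Proof.
move=> f_nc; have [n0|n_gt0] := posnP n.
  rewrite /no_const raddf_sum big1 // => s _.
  have /eqP -> : mlword k s == word [::] by rewrite mlword_eq_nil n0.
  by rewrite f_nc mulr0 /= mcoeffU mul0rn.
by rewrite /no_const mcoeff_ml_sum_out // => s; rewrite mlword_eq_nil -lt0n n_gt0.
Qed.

Lemma mlword_map (K1 K2 : choiceType) n (k : 'I_n -> K1) (p : K1 -> K2) (s : 'S_n) :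
  [seq (p x.1, x.2) | x <- (mlword k s : seq _)] = mlword (p \o k) s.
Proof. by rewrite /= -map_comp. Qed.

Section TensorContraction.
Variables (F : fieldType) (R C : lmodType F) (mulR : R -> R -> R) (mulC : C -> C -> C).
Variable l : {scalar C}.

Local Notation contract := (lin_ext (fun u : R * C => l u.2 *: u.1)).

Lemma tensor_zero_contract t : tensor_zero t -> contract t = 0.
Proof.
have contractU3 u1 u2 u3 : contract (<< u1 >> - << u2 >> - << u3 >>) =
    l u1.2 *: u1.1 - l u2.2 *: u2.1 - l u3.2 *: u3.1.
  by rewrite !linearB /= !lin_extU !scale1r.
have contractUZ c u1 u2 : contract (<< u1 >> - c *: << u2 >>) =
    l u1.2 *: u1.1 - c *: (l u2.2 *: u2.1).
  by rewrite linearB linearZ /= !lin_extU !scale1r.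
move=> /(_ (fun t => contract t = 0)); apply.
  by split=> [|x y /= x0 y0|c x /= x0]; rewrite ?linear0 ?linearD ?linearZ /= ?x0 ?y0
    ?addr0 ?scaler0.
move=> _ [[a [a' [b ->]]]|[[a [b [b' ->]]]|[[c [a [b ->]]]|[c [a [b ->]]]]]].
- by rewrite contractU3 /= scalerDr addrAC addrK subrr.
- by rewrite contractU3 /= linearD scalerDl addrAC addrK subrr.
- by rewrite contractUZ /= !scalerA mulrC subrr.
- by rewrite contractUZ /= linearZ scalerA subrr.
Qed.

Lemma tmulUU (a a' : R) (b b' : C) :
  tmul mulR mulC << (a, b) >> << (a', b') >> = << (mulR a a', mulC b b') >>.
Proof.
by rewrite /tmul !msuppU oner_eq0 !big_seq_fset1 /= !mcoeffUU mulr1.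
Qed.

Variables (G H : choiceType) (phi : G * nat -> R) (psi : H * nat -> C).

Definition tensor_eval (x : (G * H) * nat) : TRep R C :=
  << (phi (x.1.1, x.2), psi (x.1.2, x.2)) >>.

Lemma evalw_tensor_eval w : w != [::] ->
  evalw (tmul mulR mulC) tensor_eval w =
  << (evalw mulR phi [seq (x.1.1, x.2) | x <- w],
      evalw mulC psi [seq (x.1.2, x.2) | x <- w]) >>.
Proof.
case: w => [|x w] // _ /=; rewrite [tensor_eval x]/tensor_eval.
by elim: w (phi _) (psi _) => [|y w IH] a b //=; rewrite [tensor_eval y]/tensor_eval tmulUU IH.
Qed.

Lemma contract_evalw_tensor_eval w :
  contract (evalw (tmul mulR mulC) tensor_eval w) =
  l (evalw mulC psi [seq (x.1.2, x.2) | x <- w]) *: evalw mulR phi [seq (x.1.1, x.2) | x <- w].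
Proof.
case: w => [|x w]; first by rewrite /= !linear0.
by rewrite evalw_tensor_eval // lin_extU scale1r.
Qed.

Lemma contract_tensor_identity (Rg : G -> R -> Prop) (Ch : H -> C -> Prop)
    (f : FA F (G * H)%type) :
  tensor_graded_identity mulR mulC Rg Ch f ->
  graded_eval Rg phi -> graded_eval Ch psi ->
  lin_ext (fun w : {fmonom ((G * H) * nat)%type} =>
    l (evalw mulC psi [seq (x.1.2, x.2) | x <- (w : seq _)]) *:
      evalw mulR phi [seq (x.1.1, x.2) | x <- (w : seq _)]) f = 0.
Proof.
move=> [_ f_id] phi_gr psi_gr.
have /tensor_zero_contract : tensor_zero (evalp (tmul mulR mulC) tensor_eval f).
  apply: f_id => -[g h] i u; rewrite msuppU oner_eq0 inE => /eqP -> /=.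
  by split; [apply: phi_gr | apply: psi_gr].
rewrite (lin_ext_comp _ (lin_ext _)) => <-; apply: eq_bigr => w _; congr (_ *: _).
exact: esym (contract_evalw_tensor_eval _).
Qed.

End TensorContraction.

Section GeneratorOfBetaCommutativeVariety.
Variables (F : fieldType) (H : zmodType) (beta : H -> H -> F).
Hypothesis beta_bichar : skew_bicharacter beta.
Variables (C : lmodType F) (mulC : C -> C -> C) (Ch : H -> C -> Prop).
Hypothesis C_gen : generates_beta_variety beta mulC Ch.
Variables (n : nat) (h : 'I_n -> H).

Lemma evalw_mlword_zeta psi : graded_eval Ch psi -> forall s,
  evalw mulC psi (mlword h s) = (zeta_lambda beta h s)^-1 *: evalw mulC psi (mlword h 1).
Proof.
move=> psi_gr s; have [lam_neq0 J_lam] := zeta_lambdaP beta_bichar h s.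
have [_ /(_ psi psi_gr)] := (C_gen _).2 J_lam.
rewrite evalp_word_binom => /eqP; rewrite subr_eq0 => /eqP ->.
by rewrite scalerA mulVf // scale1r.
Qed.

Lemma exists_evalw_mlword_neq0 : (0 < n)%N ->
  exists2 psi, graded_eval Ch psi & evalw mulC psi (mlword h 1) != 0.
Proof.
move=> n_gt0; apply: NNPP => no_psi.
apply: (mlword_notin_T_ideal (h := h) beta_bichar n_gt0); apply/C_gen; split.
  by apply: no_const_word; rewrite -size_eq0 size_map size_enum_ord -lt0n.
move=> psi psi_gr; rewrite evalpU scale1r; apply/eqP.
by apply/negPn/negP => psi_neq0; apply: no_psi; exists psi.
Qed.

End GeneratorOfBetaCommutativeVariety.

Section Transfer.
Variables (F : fieldType) (H : zmodType) (beta : H -> H -> F).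
Hypothesis beta_bichar : skew_bicharacter beta.
Variables (C : lmodType F) (mulC : C -> C -> C) (Ch : H -> C -> Prop).
Hypothesis C_gen : generates_beta_variety beta mulC Ch.
Variables (G : choiceType) (R : lmodType F) (mulR : R -> R -> R) (Rg : G -> R -> Prop).
Variables (n : nat) (g : 'I_n -> G) (h : 'I_n -> H) (f : FA F (G * H)%type).
Hypotheses (f_id : tensor_graded_identity mulR mulC Rg Ch f)
  (fP : in_P (fun i => (g i, h i)) f).

Local Notation gh := (fun i => (g i, h i)).
Local Notation lam := (zeta_lambda beta h).

Definition phi_h_preimage : FA F G := ml_sum g (fun s => (lam s)^-1 * f@_(mlword gh s)).

Lemma phi_h_preimage_identity : graded_identity mulR Rg phi_h_preimage.
Proof.
split; first by case: f_id => f_nc _; apply: no_const_ml_sum.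
move=> phi phi_gr; rewrite evalpE lin_ext_ml_sum.
have [n0|n_gt0] := posnP n.
  rewrite big1 // => s _; have /eqP -> : mlword g s == word [::] by rewrite mlword_eq_nil n0.
  exact: scaler0.
have [psi psi_gr mC_neq0] := exists_evalw_mlword_neq0 beta_bichar C_gen h n_gt0.
have [l lm1] := exists_scalar_eq1 mC_neq0.
have := contract_tensor_identity l f_id phi_gr psi_gr.
rewrite {1}(in_P_ml_sumE fP) lin_ext_ml_sum => sum0; apply: etrans sum0.
apply: eq_bigr => s _.
rewrite (mlword_map _ fst) (mlword_map _ snd) (evalw_mlword_zeta beta_bichar C_gen h psi_gr).
by rewrite scalarZ lm1 mulr1 scalerA mulrC.
Qed.

Lemma phi_h_preimageK : phi_h g h lam phi_h_preimage = f.
Proof.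
rewrite [RHS](in_P_ml_sumE fP); apply: eq_bigr => s _; rewrite mcoeff_ml_sum.
have [lam_neq0 _] := zeta_lambdaP beta_bichar h s.
by rewrite mulrA divff ?mul1r.
Qed.

End Transfer.

Theorem mainTheorem8
    (F : fieldType) (charF0 : [pchar F] =i pred0)
    (G : choiceType) (gop : G -> G -> G) (gone : G) (ginv : G -> G)
    (G_group : is_group gop gone ginv)
    (H : zmodType) (beta : H -> H -> F) (beta_bichar : skew_bicharacter beta)
    (C : lmodType F) (mulC : C -> C -> C) (Ch : H -> C -> Prop)
    (C_alg : is_algebra mulC) (C_graded : is_grading +%R mulC Ch)
    (C_betacomm : beta_commutative beta mulC Ch)
    (C_gen : generates_beta_variety beta mulC Ch)
    (R : lmodType F) (mulR : R -> R -> R) (Rg : G -> R -> Prop)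
    (R_alg : is_algebra mulR) (R_graded : is_grading gop mulR Rg)
    (n : nat) (g : 'I_n -> G) (h : 'I_n -> H) (f : FA F (G * H)%type) :
  tensor_graded_identity mulR mulC Rg Ch f ->
  in_P (fun i => (g i, h i)) f ->
  exists f0 : FA F G,
    [/\ in_P g f0, graded_identity mulR Rg f0 &
        f = phi_h g h (zeta_lambda beta h) f0].
Proof.
move=> f_id fP; exists (phi_h_preimage beta g h f); split.
- exact: in_P_ml_sum.
- exact: phi_h_preimage_identity.
- by rewrite phi_h_preimageK.
Qed.
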